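(* Let $(\Omega, \Sigma, \mu)$ be a nonatomic measure space with $0 < \mu(\Omega) < \infty$, let $1 \le p < \infty$, $X = L^p(\mu)$, let $Y$ be a Banach space, let $g \in L^\infty(\mu)$, and let $T \in \mathcal{B}(X, Y)$ be a narrow operator. Then the operator $T g I \in \mathcal{B}(X, Y)$, $f \mapsto T(gf)$, is also narrow.
   Context: $\mathcal{B}(X,Y)$ denotes the bounded linear operators from $X$ to $Y$. A $\Sigma$-measurable function $h$ is a sign on $A \in \Sigma$ if $h$ takes values in $\{-1,0,1\}$ and $h^2 = \mathbb{I}_A$ (indicator of $A$); it is of mean zero if $\int_\Omega h\,d\mu = 0$. An operator $S \in \mathcal{B}(L^p(\mu), Y)$ is narrow if for every $A \in \Sigma$ with $\mu(A) > 0$ and every $\varepsilon > 0$ there exists a mean zero sign $h$ on $A$ with $\|Sh\| < \varepsilon$. *)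

From HB Require Import structures.
From mathcomp Require Import all_boot all_order all_algebra.
From mathcomp Require Import all_classical all_reals all_analysis.
Set Implicit Arguments. Unset Strict Implicit. Unset Printing Implicit Defensive.
Import Order.TTheory GRing.Theory Num.Theory.
Import numFieldNormedType.Exports.
Local Open Scope classical_set_scope.
Local Open Scope ring_scope.

Definition nonatomic d (T : measurableType d) (R : realType)
    (mu : {measure set T -> \bar R}) : Prop :=
  forall A : set T, measurable A -> (0 < mu A)%E ->
    exists B : set T, [/\ measurable B, B `<=` A, (0 < mu B)%E & (mu B < mu A)%E].

(* Bounded linear operators L^p(mu) -> Y, represented as maps on
   functions that are linear and bounded on the p-integrable (measurable,
   finite L^p-norm) functions.  Boundedness forces S f = S f' whenever
   f = f' a.e., so this is exactly B(L^p(mu), Y). *)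
Definition bounded_op d (T : measurableType d) (R : realType)
    (mu : {measure set T -> \bar R}) (p : R) (Y : normedModType R)
    (S : (T -> R) -> Y) : Prop :=
  [/\ (forall f g, f \in Lfun mu p%:E -> g \in Lfun mu p%:E ->
          S (f \+ g) = S f + S g),
      (forall (a : R) f, f \in Lfun mu p%:E -> S (fun x => a * f x) = a *: S f)
    & exists C : R, forall f, f \in Lfun mu p%:E ->
          `|S f| <= C * fine (Lnorm mu p%:E (EFin \o f))].

Definition is_sign d (T : measurableType d) (R : realType)
    (A : set T) (h : T -> R) : Prop :=
  measurable_fun setT h /\
  forall x, (h x = -1 \/ h x = 0 \/ h x = 1) /\ h x ^+ 2 = \1_A x.

Definition mean_zero d (T : measurableType d) (R : realType)
    (mu : {measure set T -> \bar R}) (h : T -> R) : Prop :=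
  (\int[mu]_x (h x)%:E = 0)%E.

(* Narrow operator (the operator being in B(L^p, Y) is stated separately). *)
Definition narrow d (T : measurableType d) (R : realType)
    (mu : {measure set T -> \bar R}) (Y : normedModType R)
    (S : (T -> R) -> Y) : Prop :=
  forall A : set T, measurable A -> (0 < mu A)%E ->
  forall eps : R, 0 < eps ->
    exists h : T -> R, [/\ is_sign A h, mean_zero mu h & `|S h| < eps].

From HB Require Import structures.
From mathcomp Require Import all_boot all_order all_algebra.
From mathcomp Require Import all_classical all_reals all_analysis.
From mathcomp Require Import measurable_realfun ess_sup_inf.
From mathcomp Require Import ring lra.
Set Implicit Arguments. Unset Strict Implicit. Unset Printing Implicit Defensive.
Import Order.TTheory GRing.Theory Num.Theory.
Import numFieldNormedType.Exports.
Local Open Scope classical_set_scope.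
Local Open Scope ring_scope.

(* If g is essentially bounded by M, it agrees almost everywhere with a
   measurable G bounded by M everywhere, and a bounded operator on L^p does not
   see null sets, so it suffices to show that f |-> S (G f) is bounded and
   narrow.  For narrowness on A, cut [-M, M] into
   intervals of length delta and A into the corresponding slices, on which G is
   within delta of a constant c_k.  Narrowness of S gives mean-zero signs h_k on
   the slices with |c_k| |S h_k| as small as we like; h = sum_k h_k is a
   mean-zero sign on A, and G h = sum_k c_k h_k + r with |r| <= delta, whence
   |S (G h)| <= sum_k |c_k| |S h_k| + ||S|| delta ||1||_p. *)

Lemma measurable_Lfun d (T : measurableType d) (R : realType)
    (mu : {measure set T -> \bar R}) (q : \bar R) (f : T -> R) :
  f \in Lfun mu q -> measurable_fun setT f.
Proof. by move=> /sub_Lfun_mfun; rewrite inE. Qed.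

Section Lnorm_bounds.
Context d (T : measurableType d) (R : realType) (mu : {measure set T -> \bar R}).
Variables (p : R) (p0 : 0 < p).
Local Open Scope ereal_scope.

Let measurable_powR_norm (f : T -> R) : measurable_fun setT f ->
  measurable_fun setT (fun x => (`|f x| `^ p)%:E).
Proof.
move=> mf; apply/measurable_EFinP.
by apply: (measurableT_comp (@measurable_powR R p)); exact: measurableT_comp.
Qed.

Lemma Lnorm_le_ae (u v : T -> R) :
  measurable_fun setT u -> measurable_fun setT v ->
  {ae mu, forall x, (`|u x| <= `|v x|)%R} ->
  'N[mu]_p%:E[EFin \o u] <= 'N[mu]_p%:E[EFin \o v].
Proof.
move=> mfu mfv uv; rewrite unlock /=.
have int_ge0 (f : T -> R) : \int[mu]_x (`|f x| `^ p)%:E \in `[0, +oo].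
  by rewrite in_itv /= leey andbT; apply: integral_ge0 => x _; rewrite lee_fin powR_ge0.
apply: gt0_ler_poweR; rewrite ?int_ge0 //; first by rewrite invr_ge0 ltW.
apply: ae_ge0_le_integral => //.
- exact: measurable_powR_norm.
- exact: measurable_powR_norm.
by apply: filterS uv => x uvx _; rewrite lee_fin ge0_ler_powR // ltW.
Qed.

Lemma Lnorm_ae_eq (u v : T -> R) :
  measurable_fun setT u -> measurable_fun setT v -> u = v %[ae mu] ->
  'N[mu]_p%:E[EFin \o u] = 'N[mu]_p%:E[EFin \o v].
Proof.
move=> mfu mfv uv; apply/le_anti/andP.
by split; apply: Lnorm_le_ae => //; apply: filterS uv => x /(_ I) ->.
Qed.

Lemma LnormMl (c : R) (f : T -> R) : measurable_fun setT f ->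
  'N[mu]_p%:E[EFin \o (fun x => c * f x)%R] = `|c|%:E * 'N[mu]_p%:E[EFin \o f].
Proof.
move=> mf; rewrite unlock /=.
under eq_integral do rewrite normrM powRM // EFinM.
rewrite ge0_integralZl_EFin //; last exact: measurable_powR_norm.
rewrite poweRM ?lee_fin ?powR_ge0 //; last first.
  by apply: integral_ge0 => x _; rewrite lee_fin powR_ge0.
by rewrite poweR_EFin -powRrM mulfV ?gt_eqF // powRr1.
Qed.

Lemma Lfun_ae_eq (u v : T -> R) : u \in Lfun mu p%:E -> measurable_fun setT v ->
  u = v %[ae mu] -> v \in Lfun mu p%:E.
Proof.
move=> uL mv uv; rewrite inE; apply/andP; split; rewrite inE //= /finite_norm.
rewrite -(Lnorm_ae_eq (measurable_Lfun uL) mv uv).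
by move: uL => /andP[_]; rewrite inE.
Qed.

Lemma Lnorm_le_sup (f : T -> R) (B : R) : measurable_fun setT f ->
  (forall x, `|f x| <= B)%R ->
  'N[mu]_p%:E[EFin \o f] <= `|B|%:E * 'N[mu]_p%:E[cst 1].
Proof.
move=> mf fB; rewrite -(LnormMl B (f := cst 1%R)); last exact: measurable_cst.
apply: Lnorm_le_ae => //; first by rewrite /cst; exact: measurable_cst.
by apply: nearW => x; rewrite mulr1 (le_trans (fB x)) ?ler_norm.
Qed.

Hypothesis mu_fin : mu setT < +oo.

Lemma Lnorm_cst1_lty : 'N[mu]_p%:E[cst 1] < +oo.
Proof. by rewrite Lnorm_cst1 poweR_lty. Qed.

Lemma Lfun_bounded (f : T -> R) (B : R) : measurable_fun setT f ->
  (forall x, `|f x| <= B)%R -> f \in Lfun mu p%:E.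
Proof.
move=> mf fB; rewrite inE; apply/andP; split; rewrite inE //= /finite_norm.
apply: le_lt_trans (Lnorm_le_sup mf fB) _.
by rewrite lte_mul_pinfty ?Lnorm_cst1_lty.
Qed.

End Lnorm_bounds.

Section signs.
Context d (T : measurableType d) (R : realType).
Implicit Types (A : set T) (h : T -> R).

Lemma sign_eq0 A h x : is_sign A h -> ~ A x -> h x = 0.
Proof.
case=> _ /(_ x) [_ hx2] nAx; move: hx2; rewrite indicE memNset // => /eqP.
by rewrite sqrf_eq0 => /eqP.
Qed.

Lemma sign_sqr A h x : is_sign A h -> A x -> h x ^+ 2 = 1.
Proof. by case=> _ /(_ x) [_ ->] Ax; rewrite indicE mem_set. Qed.

Lemma sign_norm_le1 A h x : is_sign A h -> `|h x| <= 1.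
Proof.
by case=> _ /(_ x) [[->|[->|->]] _]; rewrite ?normrN ?normr1 ?normr0.
Qed.

Lemma measurable_sign A h : is_sign A h -> measurable_fun setT h.
Proof. by case. Qed.

Lemma signU A1 A2 h1 h2 : (forall x, A1 x -> ~ A2 x) ->
  is_sign A1 h1 -> is_sign A2 h2 -> is_sign (A1 `|` A2) (h1 \+ h2).
Proof.
move=> A12 s1 s2; split=> [|x].
  exact: measurable_funD (measurable_sign s1) (measurable_sign s2).
have [a1|na1] := pselect (A1 x).
  rewrite /= (sign_eq0 s2 (A12 _ a1)) addr0 indicE mem_set; last by left.
  by split; [exact: (s1.2 x).1 | exact: sign_sqr s1 a1].
rewrite /= (sign_eq0 s1 na1) add0r; have [vx ->] := s2.2 x; split => //.
by rewrite !indicE; have [a2|na2] := pselect (A2 x);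
  [rewrite !mem_set //; right | rewrite !memNset // => -[]].
Qed.

Lemma is_sign_indic A : measurable A -> is_sign A (\1_A : T -> R).
Proof.
move=> mA; split=> [|x]; first exact: measurable_indic.
rewrite indicE; case: (x \in A) => /=.
  by rewrite mulr1n expr1n; split => //; right; right.
by rewrite mulr0n expr2 mulr0; split => //; right; left.
Qed.

Variable mu : {measure set T -> \bar R}.
Hypothesis mu_fin : (mu setT < +oo)%E.

Lemma Lfun_sign (p : R) A h : 0 < p -> is_sign A h -> h \in Lfun mu p%:E.
Proof.
move=> p0 sh.
exact: (Lfun_bounded p0 mu_fin (measurable_sign sh) (fun x => sign_norm_le1 x sh)).
Qed.

Lemma mean_zeroD A1 A2 h1 h2 : is_sign A1 h1 -> is_sign A2 h2 ->
  mean_zero mu h1 -> mean_zero mu h2 -> mean_zero mu (h1 \+ h2).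
Proof.
move=> s1 s2 m1 m2; rewrite /mean_zero; under eq_integral do rewrite EFinD.
have int_sign A h : is_sign A h -> mu.-integrable setT (EFin \o h).
  by move=> sh; apply/Lfun1_integrable/(Lfun_sign ltr01 sh).
by rewrite integralD ?m1 ?m2 ?adde0 //; [exact: int_sign s1 | exact: int_sign s2].
Qed.

Lemma mean_zero_indic A : measurable A -> mu A = 0%E -> mean_zero mu (\1_A : T -> R).
Proof. by move=> mA A0; rewrite /mean_zero integral_indic // setIT. Qed.

End signs.

Lemma fine_le_EFinM (R : realType) (x y : \bar R) (a : R) :
  (0 <= x)%E -> y \is a fin_num -> (x <= a%:E * y)%E -> fine x <= a * fine y.
Proof.
move=> x0 yfin xay; have ayfin : (a%:E * y)%E \is a fin_num by rewrite fin_numM.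
have xfin : x \is a fin_num.
  by rewrite ge0_fin_numE // (le_lt_trans xay) // ltey_eq ayfin.
by rewrite -[a]/(fine a%:E) -fineM // fine_le.
Qed.

Lemma fin_num_Lnorm d (T : measurableType d) (R : realType)
    (mu : {measure set T -> \bar R}) (q : \bar R) (f : T -> R) :
  f \in Lfun mu q -> 'N[mu]_q[EFin \o f]%E \is a fin_num.
Proof. by move=> /andP[_]; rewrite inE /= ge0_fin_numE ?Lnorm_ge0. Qed.

Section bounded_op_theory.
Context d (T : measurableType d) (R : realType) (mu : {measure set T -> \bar R}).
Variables (p : R) (p1 : 1 <= p).
Let p0 : 0 < p. Proof. exact: lt_le_trans ltr01 p1. Qed.
Hypothesis mu_fin : (mu setT < +oo)%E.
Variables (Y : normedModType R) (S : (T -> R) -> Y).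
Hypothesis HS : bounded_op mu p S.

Lemma bounded_op_norm : exists2 C, 0 <= C &
  forall f, f \in Lfun mu p%:E -> `|S f| <= C * fine 'N[mu]_p%:E[EFin \o f].
Proof.
case: HS => _ _ [C HC]; exists (Num.max C 0); first by rewrite le_max lexx orbT.
move=> f fL; apply: (le_trans (HC f fL)); apply: ler_wpM2r; last by rewrite le_max lexx.
exact/fine_ge0/Lnorm_ge0.
Qed.

Lemma bounded_op_le_sup : exists2 K, 0 <= K &
  forall (f : T -> R) (B : R), measurable_fun setT f ->
    (forall x, `|f x| <= B) -> `|S f| <= K * `|B|.
Proof.
have [C C0 HC] := bounded_op_norm.
have N1fin : ('N[mu]_p%:E[cst 1])%E \is a fin_num.
  by rewrite ge0_fin_numE ?Lnorm_ge0 ?Lnorm_cst1_lty.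
exists (C * fine ('N[mu]_p%:E[cst 1])%E); first exact/mulr_ge0/fine_ge0/Lnorm_ge0.
move=> f B mf fB; apply: le_trans (HC f (Lfun_bounded p0 mu_fin mf fB)) _.
rewrite -mulrA ler_wpM2l // mulrC.
exact: fine_le_EFinM (Lnorm_ge0 _ _ _) N1fin (Lnorm_le_sup mu p0 mf fB).
Qed.

Lemma bounded_op_ae0 (w : T -> R) : w \in Lfun mu p%:E -> w = cst 0 %[ae mu] ->
  S w = 0.
Proof.
move=> wL w0; have [C C0 HC] := bounded_op_norm.
have Nw0 : 'N[mu]_p%:E[EFin \o w]%E = 0%E.
  rewrite (Lnorm_ae_eq p0 (measurable_Lfun wL) (measurable_cst _) w0).
  by rewrite (_ : EFin \o cst 0 = cst 0%E) // Lnorm0 // gt_eqF // lte_fin.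
by apply/eqP; rewrite -normr_le0 (le_trans (HC w wL)) // Nw0 mulr0.
Qed.

Lemma bounded_op_ae_eq (u v : T -> R) : u \in Lfun mu p%:E -> v \in Lfun mu p%:E ->
  u = v %[ae mu] -> S u = S v.
Proof.
move=> uL vL uv; have [Sadd _ _] := HS.
have wL : u - v \in Lfun mu p%:E by exact: rpredB.
have -> : u = v \+ (u - v) by apply/funext => x /=; rewrite addrC subrK.
rewrite Sadd // [S (u - v)]bounded_op_ae0 ?addr0 //.
by apply: filterS uv => x uvx Tx; rewrite !fctE (uvx Tx) subrr.
Qed.

Lemma narrow_sign D eps : narrow mu S -> measurable D -> 0 < eps ->
  exists h, [/\ is_sign D h, mean_zero mu h & `|S h| < eps].
Proof.
move=> HSn mD eps0; have [D0|DN0] := eqVneq (mu D) 0%E.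
  exists \1_D; split; [exact: is_sign_indic | exact: mean_zero_indic |].
  rewrite bounded_op_ae0 ?normr0 //.
    exact: (Lfun_sign mu_fin p0 (is_sign_indic _ mD)).
  exists D; split => // x /= nDx; apply: contrapT => Dx; apply: nDx => _.
  by rewrite indicE memNset.
by apply: HSn; rewrite // lt0e DN0 measure_ge0.
Qed.

End bounded_op_theory.

Lemma bounded_op_eq_in d (T : measurableType d) (R : realType)
    (mu : {measure set T -> \bar R}) (p : R) (Y : normedModType R)
    (S S' : (T -> R) -> Y) :
  1 <= p -> {in Lfun mu p%:E, S =1 S'} -> bounded_op mu p S -> bounded_op mu p S'.
Proof.
move=> p1 SS' [Sadd Sscale [C HC]]; split.
- by move=> f g fL gL; rewrite -!SS' ?Sadd //; exact: rpredD.
- by move=> a f fL; rewrite -!SS' ?Sscale //; exact: rpredZ.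
- by exists C => f fL; rewrite -SS' ?HC.
Qed.

Lemma narrow_eq_in d (T : measurableType d) (R : realType)
    (mu : {measure set T -> \bar R}) (p : R) (Y : normedModType R)
    (S S' : (T -> R) -> Y) :
  0 < p -> (mu setT < +oo)%E ->
  {in Lfun mu p%:E, S =1 S'} -> narrow mu S -> narrow mu S'.
Proof.
move=> p0 mu_fin SS' HSn A mA muA eps eps0.
have [h [sh mh Sh]] := HSn A mA muA eps eps0.
by exists h; split => //; rewrite -SS' //; exact: (Lfun_sign mu_fin p0 sh).
Qed.

Section multiplication_operator.
Context d (T : measurableType d) (R : realType) (mu : {measure set T -> \bar R}).
Variables (p : R) (p1 : 1 <= p).
Let p0 : 0 < p. Proof. exact: lt_le_trans ltr01 p1. Qed.
Variables (G : T -> R) (M : R).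
Hypotheses (mG : measurable_fun setT G) (GM : forall x, `|G x| <= M).

Lemma Lnorm_mul_le (f : T -> R) : measurable_fun setT f ->
  ('N[mu]_p%:E[EFin \o (fun x => G x * f x)%R] <=
    `|M|%:E * 'N[mu]_p%:E[EFin \o f])%E.
Proof.
move=> mf; rewrite -LnormMl //; apply: Lnorm_le_ae => //.
- exact: measurable_funM.
- by apply: measurable_funM => //; exact: measurable_cst.
by apply: nearW => x; rewrite !normrM ler_wpM2r // (le_trans (GM x)) // ler_norm.
Qed.

Lemma Lfun_mul (f : T -> R) : f \in Lfun mu p%:E ->
  (fun x => G x * f x) \in Lfun mu p%:E.
Proof.
move=> fL; have mf := measurable_Lfun fL.
rewrite inE; apply/andP; split; rewrite inE /=; first exact: measurable_funM.
rewrite /finite_norm (le_lt_trans (Lnorm_mul_le mf)) // lte_mul_pinfty //.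
by move: fL => /andP[_]; rewrite inE.
Qed.

Variables (Y : normedModType R) (S : (T -> R) -> Y).
Hypothesis HS : bounded_op mu p S.

Lemma bounded_op_mul : bounded_op mu p (fun f => S (fun x => G x * f x)).
Proof.
have [Sadd Sscale _] := HS; have [C C0 HC] := bounded_op_norm HS.
split.
- move=> f g fL gL; rewrite -Sadd ?Lfun_mul //.
  by congr S; apply/funext => x /=; rewrite mulrDr.
- move=> a f fL; rewrite -Sscale ?Lfun_mul //.
  by congr S; apply/funext => x; rewrite mulrCA.
exists (C * `|M|) => f fL; apply: le_trans (HC _ (Lfun_mul fL)) _.
rewrite -mulrA ler_wpM2l //.
exact: fine_le_EFinM (Lnorm_ge0 _ _ _) (fin_num_Lnorm fL)
  (Lnorm_mul_le (measurable_Lfun fL)).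
Qed.

Lemma bounded_op_mul_ae_eq (g : T -> R) : measurable_fun setT g -> G = g %[ae mu] ->
  {in Lfun mu p%:E,
    (fun f => S (fun x => G x * f x)) =1 (fun f => S (fun x => g x * f x))}.
Proof.
move=> mg Gg f fL /=; have GfL := Lfun_mul fL.
have Gf_gf : (fun x => G x * f x) = (fun x => g x * f x) %[ae mu].
  by apply: filterS Gg => x /[apply] ->.
have gfL : (fun x => g x * f x) \in Lfun mu p%:E.
  exact: (Lfun_ae_eq p0 GfL (measurable_funM mg (measurable_Lfun fL)) Gf_gf).
exact: (bounded_op_ae_eq p1 HS GfL gfL Gf_gf).
Qed.

End multiplication_operator.

Section narrow_multiplication.
Context d (T : measurableType d) (R : realType) (mu : {measure set T -> \bar R}).
Variables (p : R) (p1 : 1 <= p).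
Let p0 : 0 < p. Proof. exact: lt_le_trans ltr01 p1. Qed.
Hypothesis mu_fin : (mu setT < +oo)%E.
Variables (G : T -> R) (M : R).
Hypotheses (mG : measurable_fun setT G) (GM : forall x, `|G x| <= M).
Variables (Y : normedModType R) (S : (T -> R) -> Y).
Hypotheses (HS : bounded_op mu p S) (HSn : narrow mu S).

(* The remainders r of disjoint slices have disjoint supports, so their sum
   is still bounded by delta and is estimated only once, at the end. *)
Definition narrow_upto (delta : R) (B : set T) (e : R) :=
  exists h r : T -> R, [/\ is_sign B h, mean_zero mu h, measurable_fun setT r,
    (forall x, `|r x| <= delta * \1_B x) &
    `|S (fun x => G x * h x) - S r| <= e].

Let remainder_le delta B (r : T -> R) : 0 <= delta ->
  (forall x, `|r x| <= delta * \1_B x) -> forall x, `|r x| <= delta.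
Proof.
by move=> delta0 rB x; rewrite (le_trans (rB x)) // ler_piMr // indicE lern1 leq_b1.
Qed.

Let Lfun_remainder delta B (r : T -> R) : 0 <= delta -> measurable_fun setT r ->
  (forall x, `|r x| <= delta * \1_B x) -> r \in Lfun mu p%:E.
Proof.
by move=> delta0 mr rB; exact: (Lfun_bounded p0 mu_fin mr (remainder_le delta0 rB)).
Qed.

Lemma narrow_uptoU delta B1 B2 e1 e2 : 0 <= delta ->
  (forall x, B1 x -> ~ B2 x) ->
  narrow_upto delta B1 e1 -> narrow_upto delta B2 e2 ->
  narrow_upto delta (B1 `|` B2) (e1 + e2).
Proof.
move=> delta0 B12 [h1 [r1 [s1 m1 mr1 r1B S1]]] [h2 [r2 [s2 m2 mr2 r2B S2]]].
have [Sadd _ _] := HS.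
have GhL (h : T -> R) (A : set T) :
    is_sign A h -> (fun x => G x * h x) \in Lfun mu p%:E.
  by move=> sh; exact: (Lfun_mul (f := h) p1 mG GM (Lfun_sign mu_fin p0 sh)).
exists (h1 \+ h2), (r1 \+ r2); split.
- exact: signU.
- exact: mean_zeroD s1 s2 m1 m2.
- exact: measurable_funD.
- move=> x; have -> : \1_(B1 `|` B2) x = \1_B1 x + \1_B2 x :> R.
    rewrite !indicE; have [b1|nb1] := pselect (B1 x).
      by rewrite (memNset (B12 _ b1)) !mem_set ?addr0 //; left.
    rewrite (memNset nb1) add0r; have [b2|nb2] := pselect (B2 x).
      by rewrite !mem_set //; right.
    by rewrite !memNset // => -[].
  by rewrite mulrDr (le_trans (ler_normD _ _)) // lerD.
have -> : (fun x => G x * (h1 \+ h2) x) =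
    (fun x => G x * h1 x) \+ (fun x => G x * h2 x).
  by apply/funext => x /=; rewrite mulrDr.
rewrite !Sadd ?(GhL _ _ s1) ?(GhL _ _ s2) ?(Lfun_remainder delta0 mr1 r1B)
  ?(Lfun_remainder delta0 mr2 r2B) //.
by rewrite opprD addrACA (le_trans (ler_normD _ _)) // lerD.
Qed.

Lemma narrow_upto_slice delta B c e : 0 <= delta -> measurable B -> 0 < e ->
  (forall x, B x -> c <= G x <= c + delta) -> narrow_upto delta B e.
Proof.
move=> delta0 mB e0 GB; have [Sadd Sscale _] := HS.
have c1 : 0 < `|c| + 1 by rewrite ltr_wpDl.
have [h [sh mh Sh]] := narrow_sign p1 mu_fin HS HSn mB (divr_gt0 e0 c1).
pose r x := (G x - c) * h x.
have mr : measurable_fun setT r.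
  by apply: measurable_funM (measurable_sign sh); exact: measurable_funB.
have rB x : `|r x| <= delta * \1_B x.
  rewrite /r normrM; have [Bx|nBx] := pselect (B x); last first.
    by rewrite (sign_eq0 sh nBx) normr0 mulr0 indicE memNset // mulr0.
  rewrite indicE mem_set // mulr1 -[delta]mulr1 ler_pM ?(sign_norm_le1 x sh) //.
  by have /andP[cG Gc] := GB x Bx; rewrite ler_norml; apply/andP; split; lra.
exists h; exists r; split => //.
have -> : (fun x => G x * h x) = r \+ (fun x => c * h x).
  by apply/funext => x /=; rewrite /r mulrBl subrK.
rewrite Sadd ?Sscale ?(Lfun_remainder delta0 mr rB) ?rpredZ
  ?(Lfun_sign mu_fin p0 sh) //.
rewrite addrAC subrr add0r normrZ (le_trans (ler_wpM2l (normr_ge0 c) (ltW Sh))) //.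
by rewrite mulrA ler_pdivrMr // mulrDr mulr1 mulrC lerDl ltW.
Qed.

Lemma narrow_upto_band A a delta e n : measurable A -> 0 <= delta -> 0 < e ->
  narrow_upto delta (A `&` G @^-1` `[a, a + n.+1%:R * delta[) (n.+1%:R * e).
Proof.
move=> mA delta0 e0.
have slice c : narrow_upto delta (A `&` G @^-1` `[c, c + delta[) e.
  apply: (narrow_upto_slice (c := c)) => //.
    by apply: measurableI mA _; rewrite -[X in measurable X]setTI; exact: mG.
  by move=> x [_ /=]; rewrite in_itv /= => /andP[-> /ltW ->].
elim: n => [|n IH]; first by rewrite !mul1r; exact: slice.
set b := a + n.+1%:R * delta.
have bandS : A `&` G @^-1` `[a, a + n.+2%:R * delta[ =
    (A `&` G @^-1` `[a, b[) `|` (A `&` G @^-1` `[b, b + delta[).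
  rewrite -setIUr -[n.+2%:R]natr1 mulrDl mul1r addrA -/b; congr (A `&` _).
  apply/seteqP; split => x /=.
    rewrite !in_itv /= => /andP[aG Gb].
    by have [Gc|cG] := ltP (G x) b; [left|right]; rewrite /= ?aG ?Gb.
  have ab : a <= b by rewrite lerDl mulr_ge0.
  by rewrite !in_itv /= => -[] /andP[lo hi]; apply/andP; split; lra.
rewrite bandS -natr1 mulrDl mul1r; apply: narrow_uptoU => //.
by move=> x [_ /=]; rewrite in_itv /= => /andP[_ Gb] [_ /=]; rewrite in_itv /= leNgt Gb.
Qed.

Lemma narrow_mul : narrow mu (fun f => S (fun x => G x * f x)).
Proof.
move=> A mA _ eps eps0.
have [K K0 HK] := bounded_op_le_sup p1 mu_fin HS.
pose delta := eps / (2 * (K + 1)).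
have delta0 : 0 < delta by rewrite divr_gt0 // mulr_gt0 //; lra.
pose n := Num.Def.archi_bound (2 * `|M| / delta).
have nM : 2 * `|M| / delta < n%:R.
  by apply/archi_boundP/divr_ge0; [rewrite mulr_ge0 | exact: ltW].
pose e := eps / (2 * n.+1%:R).
have e0 : 0 < e by rewrite divr_gt0 // mulr_gt0 // ltr0Sn.
have [h [r [sh mh mr rB Sh]]] :=
  narrow_upto_band (- `|M|) n mA (ltW delta0) e0.
have bandA : A `&` G @^-1` `[- `|M|, - `|M| + n.+1%:R * delta[ = A.
  apply/seteqP; split => x; first by case.
  move=> Ax; split => //=; rewrite in_itv /=.
  have := le_trans (GM x) (ler_norm M); rewrite ler_norml => /andP[lo hi].
  move: nM; rewrite ltr_pdivrMr // -natr1 mulrDl mul1r => nM.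
  by apply/andP; split => //; lra.
exists h; split => //; first by rewrite -bandA.
have Sr : `|S r| <= K * delta.
  by have := HK r delta mr (remainder_le (ltW delta0) rB); rewrite gtr0_norm.
have := ler_normD (S (fun x => G x * h x) - S r) (S r); rewrite subrK.
have ne : n.+1%:R * e = eps / 2 by rewrite /e; field.
have Kd : K * delta + delta = eps / 2 by rewrite /delta; field; lra.
lra.
Qed.

End narrow_multiplication.

Section essentially_bounded.
Context d (T : measurableType d) (R : realType) (mu : {measure set T -> \bar R}).

Lemma ae_le_Linfty_norm (g : T -> R) : (0 < mu setT)%E -> g \in Lfun mu +oo%E ->
  {ae mu, forall x, `|g x| <= fine 'N[mu]_+oo[EFin \o g]%E}.
Proof.
move=> mu0 gL; have := fin_num_Lnorm gL; rewrite unlock /= mu0 => Nfin.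
apply: filterS (ess_sup_ge mu (abse \o (EFin \o g))) => x /=.
by rewrite -[X in (_ <= X)%E](fineK Nfin) lee_fin.
Qed.

Lemma exists_bounded_ae_eq (g : T -> R) (M : R) : measurable_fun setT g -> 0 <= M ->
  {ae mu, forall x, `|g x| <= M} ->
  exists G : T -> R,
    [/\ measurable_fun setT G, forall x, `|G x| <= M & G = g %[ae mu]].
Proof.
move=> mg M0 gM; exists (fun x => Num.max (- M) (Num.min M (g x))); split.
- apply: (measurable_maxr (f := cst (- M))); first exact: measurable_cst.
  by apply: (measurable_minr (f := cst M)) => //; exact: measurable_cst.
- move=> x; rewrite ler_norml; apply/andP; split; first by rewrite le_max lexx.
  by rewrite ge_max ge_min lexx /= andbT; lra.
apply: filterS gM => x; rewrite ler_norml => /andP[lo hi] _.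
by rewrite (min_idPr hi) (max_idPr lo).
Qed.

End essentially_bounded.

Theorem lemma2p1 (d : measure_display) (T : measurableType d) (R : realType)
    (mu : {measure set T -> \bar R})
    (Hna : nonatomic mu)
    (Hpos : (0 < mu setT)%E) (Hfin : (mu setT < +oo)%E)
    (p : R) (Hp : 1 <= p)
    (Y : completeNormedModType R)
    (g : T -> R) (Hg : g \in Lfun mu +oo%E)
    (S : (T -> R) -> Y)
    (HS : bounded_op mu p S) (HSn : narrow mu S) :
  bounded_op mu p (fun f => S (fun x => g x * f x)) /\
  narrow mu (fun f => S (fun x => g x * f x)).
Proof.
have p0 : 0 < p by exact: lt_le_trans ltr01 Hp.
have mg := measurable_Lfun Hg.
have [G [mG GM Gg]] :=
  exists_bounded_ae_eq mg (fine_ge0 (Lnorm_ge0 _ _ _)) (ae_le_Linfty_norm Hpos Hg).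
have GgS := bounded_op_mul_ae_eq Hp mG GM HS mg Gg.
split; first exact: bounded_op_eq_in Hp GgS (bounded_op_mul Hp mG GM HS).
exact: narrow_eq_in p0 Hfin GgS (narrow_mul Hp Hfin mG GM HS HSn).
Qed.
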